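(* There is an absolute constant $K$ such that, for every $0<\epsilon<1$, over any sequence of soft sequence heap operations containing $N$ insertions, the sum over all sequences ever created (by insertion or by merging, after the possible application of $\mathrm{reduce}$) of their lengths at creation is at most $K\cdot N\lg\frac1\epsilon$ (for $\epsilon\le 1/2$; in general $O(N(1+\lg\frac1\epsilon))$).
   Context: Soft sequence heap with error parameter $0<\epsilon<1$ and $r_0=\lceil \lg(1/\epsilon)\rceil$ ($\lg$ = binary logarithm). The heap stores a list of nonempty sequences of items, each sorted increasingly by key and having a nonnegative integer rank. The operation $\mathrm{reduce}(L)$ on a sorted sequence $L=e_1,\dots,e_m$ removes $e_{2i}$ from $L$ for every $1\le i<m/2$, so the result has $\lceil (m+1)/2\rceil$ items. Each insertion creates one new sequence of rank $0$ containing the inserted item. A sequence of rank $r+1$ is created only by merging (sorted union) two existing sequences of rank $r$, which are thereby destroyed; if $r+1>r_0$ and $r+1-r_0$ is even, $\mathrm{reduce}$ is then applied to the result. Insertions and melds (which combine the sequence lists of two heaps) perform such merges while two sequences have equal rank; extract-min operations only remove items from sequences. *)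

From Stdlib Require Import Reals.
From mathcomp Require Import all_boot.
Set Implicit Arguments. Unset Strict Implicit. Unset Printing Implicit Defensive.

Definition lg (x : R) : R := Rdiv (ln x) (ln 2).

Definition ceilR (x : R) : Z := (- Int_part (- x))%Z.

(* r_0 = ceil(lg(1/eps)) (a natural number, since 0 < eps < 1). *)
Definition r0_of (eps : R) : nat := Z.to_nat (ceilR (lg (Rinv eps))).

(* reduce(L) on a sorted sequence of m items leaves ceil((m+1)/2) items;
   ceil((m+1)/2) = floor((m+2)/2). *)
Definition reduce_len (m : nat) : nat := (m.+2)./2.

(* Length of a freshly created sequence of rank r' obtained by merging
   sequences of total length m: reduce is applied iff r' > r0 and r' - r0
   is even. *)
Definition created_len (r0 r' m : nat) : nat :=
  if (r0 < r') && ~~ odd (r' - r0) then reduce_len m else m.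

(* Abstract state: the pool of all sequences currently present (in all
   heaps), each recorded as (rank, current length); lengths are >= 1. *)
Definition pool := seq (nat * nat).

(* One elementary step: [step r0 s t n c] means pool s becomes pool t,
   performing n insertions and creating sequences of total length c. *)
Inductive step (r0 : nat) : pool -> pool -> nat -> nat -> Prop :=
| StepInsert (s : pool) :
    step r0 s ((0, 1) :: s) 1 1
| StepMerge (s rest : pool) (r l1 l2 : nat) :
    perm_eq s ((r, l1) :: (r, l2) :: rest) ->
    step r0 s ((r.+1, created_len r0 r.+1 (l1 + l2)) :: rest) 0
         (created_len r0 r.+1 (l1 + l2))
| StepRemove (s rest : pool) (r l : nat) :
    perm_eq s ((r, l.+1) :: rest) ->
    step r0 s (if l == 0 then rest else (r, l) :: rest) 0 0.

(* [exec r0 s N C]: starting from no sequences, a run of operations reaches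
   pool s with N insertions in total and total creation length C. *)
Inductive exec (r0 : nat) : pool -> nat -> nat -> Prop :=
| ExecNil : exec r0 [::] 0 0
| ExecStep (s t : pool) (N C n c : nat) :
    exec r0 s N C -> step r0 s t n c -> exec r0 t (N + n) (C + c).

(* Creation cost of a soft sequence heap: a potential argument.

   By induction on ranks, a sequence of rank r never has
   more than [max_len r0 r] items, where max_len doubles at every rank and is
   additionally halved (via reduce) at ranks r0+2, r0+4, ...; explicitly it is
   2^r up to rank r0 and roughly 2^k (2^r0 + 1) at ranks r0+2k, r0+2k+1.
   Give every sequence of rank r the potential [potential r0 r]
   (2^r (r0 - r + 6) below r0, of order 2^k (2^r0 + 1) above).  The key
   inequality [potential_merge] says that merging two rank-r sequences frees
   enough potential to pay both for the created sequence's length and for its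
   own potential.  Hence along any run, the creation cost plus the potential of
   the current pool stays below (r0 + 7) N, each insertion contributing r0 + 7
   ([exec_invariant]).  Finally r0 <= lg(1/eps) + 1, which gives the bound
   with K = 9, and lg(1/eps) >= 1 when eps <= 1/2. *)

From Stdlib Require Import Reals Lra ZArith.
From mathcomp Require Import all_boot zify.
Set Implicit Arguments. Unset Strict Implicit. Unset Printing Implicit Defensive.

(* Largest possible length of a sequence of rank r: a rank-(r+1) sequence is
   created from two rank-r sequences, then possibly reduced. *)
Fixpoint max_len (r0 r : nat) : nat :=
  if r is r'.+1 then created_len r0 r (2 * max_len r0 r') else 1.

Definition potential (r0 r : nat) : nat :=
  if r <= r0 then 2 ^ r * (r0 - r + 6)
  else (if odd (r - r0) then 4 else 3) * 2 ^ ((r - r0)./2) * (2 ^ r0 + 1).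

Lemma created_len_mono r0 r m1 m2 :
  m1 <= m2 -> created_len r0 r m1 <= created_len r0 r m2.
Proof. by move=> le_m; rewrite /created_len; case: ifP => _ //; apply: half_leq. Qed.

(* Up to rank r0 no reduction happens, so lengths just double. *)
Lemma max_len_below r0 r : r <= r0 -> max_len r0 r = 2 ^ r.
Proof.
elim: r => [//|r IH] le_r /=.
by rewrite /created_len IH ?(ltnW le_r) // ltnNge le_r expnS.
Qed.

(* Above rank r0, two ranks (one doubling, one doubling plus reduce)
   multiply max_len + 1 by exactly 2. *)
Lemma max_len_above r0 k :
  max_len r0 (r0 + k.*2) + 1 = 2 ^ k * (2 ^ r0 + 1) /\
  max_len r0 (r0 + k.*2).+1 + 2 = 2 ^ k.+1 * (2 ^ r0 + 1).
Proof.
elim: k => [|k [_ IHodd]].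
  rewrite addn0 max_len_below //= /created_len max_len_below // ltnSn.
  by rewrite subSn // subnn /=; lia.
have even_rank : r0 + k.+1.*2 = (r0 + k.*2).+2 by rewrite doubleS !addnS.
have reduced : created_len r0 (r0 + k.*2).+2 (2 * max_len r0 (r0 + k.*2).+1)
               = (max_len r0 (r0 + k.*2).+1).+1.
  rewrite /created_len -!addnS addKn /= negbK odd_double /reduce_len.
  have -> : (r0 < r0 + k.*2.+2) = true by lia.
  by rewrite mul2n /= doubleK.
have not_reduced : forall m, created_len r0 (r0 + k.*2).+3 m = m.
  by move=> m; rewrite /created_len -!addnS addKn /= negbK odd_double andbF.
rewrite even_rank /= reduced not_reduced.
by move: IHodd; rewrite !expnS; lia.
Qed.

Lemma potential_even r0 k :
  0 < k -> potential r0 (r0 + k.*2) = 3 * 2 ^ k * (2 ^ r0 + 1).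
Proof.
move=> k_gt0; rewrite /potential addKn odd_double doubleK.
by have -> : (r0 + k.*2 <= r0) = false by lia.
Qed.

Lemma potential_odd r0 k :
  potential r0 (r0 + k.*2.+1) = 4 * 2 ^ k * (2 ^ r0 + 1).
Proof.
rewrite /potential addKn /= odd_double uphalf_double.
by have -> : (r0 + k.*2.+1 <= r0) = false by lia.
Qed.

Lemma potential_merge r0 r :
  max_len r0 r.+1 + potential r0 r.+1 <= 2 * potential r0 r.
Proof.
have pow_gt0 : 0 < 2 ^ r0 by rewrite expn_gt0.
have [lt_r|gt_r|->] := ltngtP r r0.
- rewrite max_len_below // /potential lt_r (ltnW lt_r) expnS; nia.
- have split_r := odd_double_half (r - r0).
  set k := (r - r0)./2 in split_r.
  case: (odd _) split_r => split_r; rewrite /= in split_r.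
  + have -> : r = r0 + k.*2.+1 by lia.
    have -> : (r0 + k.*2.+1).+1 = r0 + k.+1.*2 by rewrite doubleS; lia.
    have [max_len_r1 _] := max_len_above r0 k.+1.
    rewrite potential_even // potential_odd.
    by move: max_len_r1; rewrite expnS; nia.
  + have -> : r = r0 + k.*2 by lia.
    have k_gt0 : 0 < k by lia.
    have [_ max_len_r1] := max_len_above r0 k.
    rewrite -addnS potential_odd potential_even //.
    by move: max_len_r1; rewrite -addnS expnS; nia.
- have [_ max_len_r1] := max_len_above r0 0.
  rewrite addn0 expn1 in max_len_r1.
  have -> : potential r0 r0 = 2 ^ r0 * 6 by rewrite /potential leqnn subnn.
  have -> : potential r0 r0.+1 = 4 * (2 ^ r0 + 1).
    by rewrite /potential ltnn subSn // subnn /= expn0 muln1.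
  nia.
Qed.

Definition pool_bounded (r0 : nat) (s : pool) : bool :=
  all (fun e : nat * nat => e.2 <= max_len r0 e.1) s.

Definition pool_potential (r0 : nat) (s : pool) : nat :=
  \sum_(e <- s) potential r0 e.1.

(* The amortization invariant, maintained by every operation: an insertion
   brings r0 + 7 = 1 + potential r0 0 units, a merge is paid by
   [potential_merge], and a removal only loses potential. *)
Lemma exec_invariant r0 s N C :
  exec r0 s N C ->
  pool_bounded r0 s /\ C + pool_potential r0 s <= (r0 + 7) * N.
Proof.
rewrite /pool_bounded /pool_potential.
elim=> [|{}s t {}N {}C n c _ [bounded_s cost_s] step_st]; first by rewrite big_nil.
case: step_st bounded_s cost_s => {t n c}.
- move=> s0 bounded_s cost_s; rewrite /= bounded_s big_cons.
  have -> : potential r0 0 = r0 + 6 by rewrite /potential subn0 mul1n.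
  split => //; lia.
- move=> s0 rest r l1 l2 perm_s bounded_s cost_s.
  rewrite (perm_all _ perm_s) /= in bounded_s.
  case/and3P: bounded_s => le_l1 le_l2 bounded_rest.
  rewrite (perm_big _ perm_s) !big_cons /= in cost_s.
  have le_created : created_len r0 r.+1 (l1 + l2) <= max_len r0 r.+1.
    by rewrite [max_len r0 r.+1]/=; apply: created_len_mono; lia.
  rewrite /= le_created bounded_rest big_cons /=; split => //.
  by have := potential_merge r0 r; lia.
- move=> s0 rest r l perm_s bounded_s cost_s.
  rewrite (perm_all _ perm_s) /= in bounded_s.
  case/andP: bounded_s => le_l bounded_rest.
  rewrite (perm_big _ perm_s) !big_cons /= in cost_s.
  case: (l == 0); first by split => //; lia.
  rewrite /= bounded_rest big_cons /=; split; lia.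
Qed.

Lemma creation_cost_bound r0 s N C : exec r0 s N C -> C <= (r0 + 7) * N.
Proof. by move=> run; have [_ cost] := exec_invariant run; lia. Qed.

Local Open Scope R_scope.

Lemma lg_inv_ge eps a : 0 < a -> 0 < eps -> a * eps <= 1 -> lg a <= lg (/ eps).
Proof.
move=> a_gt0 eps_gt0 le_a.
have ln2_gt0 : 0 < ln 2 by rewrite -ln_1; apply: ln_increasing; lra.
have le_inv : a <= / eps.
  by apply: (Rmult_le_reg_r eps) => //; rewrite Rinv_l; lra.
rewrite /lg /Rdiv; apply: Rmult_le_compat_r; first by left; apply: Rinv_0_lt_compat.
case: (Rle_lt_or_eq_dec _ _ le_inv) => [lt_inv|->]; last by right.
by left; apply: ln_increasing.
Qed.

Lemma lg_1 : lg 1 = 0.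
Proof. by rewrite /lg ln_1 /Rdiv Rmult_0_l. Qed.

Lemma lg_2 : lg 2 = 1.
Proof.
rewrite /lg /Rdiv Rinv_r //; apply: Rgt_not_eq.
by rewrite -ln_1; apply: ln_increasing; lra.
Qed.

Lemma r0_of_le eps : 0 < eps -> eps < 1 -> INR (r0_of eps) <= lg (/ eps) + 1.
Proof.
move=> eps_gt0 eps_lt1; rewrite /r0_of /ceilR.
set x := lg (/ eps).
have x_ge0 : 0 <= x by rewrite -lg_1 /x; apply: lg_inv_ge; lra.
have [_ int_part_gt] := base_Int_part (- x).
case: (Z_le_gt_dec 0 (- Int_part (- x))) => [z_ge0|z_lt0].
- rewrite INR_IZR_INZ Z2Nat.id // opp_IZR; lra.
- have -> : Z.to_nat (- Int_part (- x)) = 0%nat by lia.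
  simpl; lra.
Qed.

Theorem lemma4 :
  exists K : R,
    forall eps : R, Rlt 0 eps -> Rlt eps 1 ->
    forall (s : pool) (N C : nat), exec (r0_of eps) s N C ->
      Rle (INR C) (Rmult (Rmult K (INR N)) (Rplus 1 (lg (Rinv eps)))) /\
      (Rle eps (Rinv 2) ->
       Rle (INR C) (Rmult (Rmult K (INR N)) (lg (Rinv eps)))).
Proof.
exists 9 => eps eps_gt0 eps_lt1 s N C run.
have cost : INR C <= (INR (r0_of eps) + 7) * INR N.
  have -> : (INR (r0_of eps) + 7) * INR N = INR ((r0_of eps + 7) * N).
    by rewrite mult_INR plus_INR; simpl; lra.
  by apply: le_INR; apply/leP; apply: creation_cost_bound run.
have r0_le := r0_of_le eps_gt0 eps_lt1.
have lg_ge0 : 0 <= lg (/ eps) by rewrite -lg_1; apply: lg_inv_ge; lra.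
have N_ge0 := pos_INR N.
split; first nra.
move=> eps_le_half.
have lg_ge1 : 1 <= lg (/ eps).
  by rewrite -lg_2; apply: lg_inv_ge => //; lra.
nra.
Qed.
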